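(* Let $\Psi\in\Delta_7$ be a spinor of unit length and let $\omega^3\in\Lambda^3(\mathbb{R}^7)$ be defined by $\omega^3(X,Y,Z):=-\big(X\cdot Y\cdot Z\cdot\Psi,\Psi\big)$. Let $p,q,r\in\mathbb{R}$. Then the equation $$\Big(X+\tfrac r4\,(X\lrcorner\omega^3)+p\,(X\lrcorner *\omega^3)+q\,(X\wedge *\omega^3)\Big)\cdot\Psi=0$$ holds for all vectors $X\in\mathbb{R}^7$ if and only if $16p=-4+12q-3r$.
   Context: $\mathbb{R}^7$ carries the Euclidean metric; $\Delta_7$ is the real $8$-dimensional spin representation with $\mathrm{Spin}(7)$-invariant inner product $(\cdot,\cdot)$ for which Clifford multiplication by vectors is skew-symmetric; Clifford multiplication satisfies $X\cdot X=-|X|^2$, and $k$-forms act by Clifford multiplication ($e_{i_1}\wedge\cdots\wedge e_{i_k}\mapsto e_{i_1}\cdots e_{i_k}$ for an orthonormal basis, distinct indices). For such $\Psi$ one has $\omega^3\cdot\Psi=-7\Psi$. $*$ is the Hodge star of the Euclidean metric for the orientation of $\mathbb{R}^7$ fixed by the chosen realization of the spin representation; with this orientation $( *\omega^3)\cdot\Psi=-7\Psi$. *)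

From mathcomp Require Import all_boot all_order all_algebra.
Set Implicit Arguments.
Unset Strict Implicit.
Unset Printing Implicit Defensive.
Import Order.TTheory GRing.Theory Num.Theory.
Local Open Scope ring_scope.

Section Spin7.
Variable R : realFieldType.

(* Delta_7 = R^8 (column vectors) with the standard inner product. *)
Definition spinor := 'cV[R]_8.
Definition sdot (u v : spinor) : R := (u^T *m v) 0 0.

Definition vec := 'rV[R]_7.
Definition basis (i : 'I_7) : vec := \row_j (i == j)%:R.

(* A realization of Clifford multiplication by e_1..e_7 on Delta_7:
   gam i is the matrix of Clifford multiplication by e_i. *)
Definition clifford_realization (gam : 'I_7 -> 'M[R]_8) : Prop :=
  (forall i j, gam i *m gam j + gam j *m gam i = (- 2 * (i == j)%:R)%:M) /\
  (forall i, (gam i)^T = - gam i).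

Variable gam : 'I_7 -> 'M[R]_8.

Definition vact (X : vec) : 'M[R]_8 := \sum_(i < 7) X 0 i *: gam i.

(* A k-form is represented by its components alpha(e_{i_1},...,e_{i_k}),
   as a function on index sequences (only length-k sequences are used). *)
Definition form := seq 'I_7 -> R.

Definition strictly_increasing (s : seq 'I_7) : bool :=
  sorted (fun a b : 'I_7 => (a < b)%N) s.

(* Clifford action of a k-form: e_{i1}/\.../\e_{ik} |-> e_{i1}...e_{ik}, i1<...<ik *)
Definition cl_form (k : nat) (alpha : form) : 'M[R]_8 :=
  \sum_(t : k.-tuple 'I_7 | strictly_increasing t)
     alpha t *: \prod_(i <- t) gam i.

Definition interior (X : vec) (alpha : form) : form :=
  fun s => \sum_(i < 7) X 0 i * alpha (i :: s).

Definition wedge1 (X : vec) (beta : form) : form :=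
  fun s => \sum_(j < size s)
     (-1) ^+ j * X 0 (nth ord0 s j) * beta (take j s ++ drop j.+1 s).

Definition levi (s : seq 'I_7) : R :=
  if size s == 7%N then
    \prod_(a < 7) \prod_(b < 7 | (a < b)%N)
      (let x := nth ord0 s a in let y := nth ord0 s b in
       if (x < y)%N then 1 else if x == y then 0 else -1)
  else 0.

(* Hodge star of a k-form, for the orientation o * (e_1 /\ ... /\ e_7), o = +-1 *)
Definition hodge (o : R) (k : nat) (alpha : form) : form :=
  fun J => o * \sum_(t : k.-tuple 'I_7 | strictly_increasing t)
                  alpha t * levi (tval t ++ J).

Definition omega3 (Psi : spinor) (X Y Z : vec) : R :=
  - sdot (vact X *m vact Y *m vact Z *m Psi) Psi.

Definition omega3_form (Psi : spinor) : form :=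
  fun s => omega3 Psi (basis (nth ord0 s 0)) (basis (nth ord0 s 1))
                      (basis (nth ord0 s 2)).

End Spin7.

(** The three form actions in the equation are multiples of Clifford multiplication by [X]:
    (X ⌟ ω)·Ψ = 3 X·Ψ,  (X ⌟ *ω)·Ψ = 4 X·Ψ  and  (X ∧ *ω)·Ψ = -3 X·Ψ,
    so the equation reads (1 + 3r/4 + 4p - 3q) X·Ψ = 0, while e_1·Ψ ≠ 0.

    Since Ψ, e_1·Ψ, ..., e_7·Ψ is an orthonormal basis of Δ_7, the operator
    T(M) = Σ_i e_i M e_iᵀ maps the projection Π = ΨΨᵀ to 1 - Π; expanding T(T(Π)) shows
    that the projections onto the e_i e_j·Ψ (i < j) add up to 3(1 - Π).  As ω(e_a, e_i, e_j)
    is the component of e_a·Ψ along e_i e_j·Ψ, this is the first identity, and summing it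
    over a gives ω·Ψ = -7Ψ.  The volume element acts as a scalar o = ±1, so each monomial
    e_K of *ω equals ±o e_t for the complementary index triple t.  Hence (X ⌟ *ω)·Ψ and
    (X ∧ *ω)·Ψ become, up to sign, sums of X_a e_a·ω_t e_t·Ψ over the pairs (a, t) with
    a ∉ t, resp. a ∈ t.  Over all pairs this sum is -7 X·Ψ by ω·Ψ = -7Ψ, and over the pairs
    with a ∈ t it is -3 X·Ψ by the first identity. *)

From mathcomp Require Import all_boot all_order all_algebra.
From mathcomp Require Import ring lra.
Set Implicit Arguments.
Unset Strict Implicit.
Unset Printing Implicit Defensive.
Import Order.TTheory GRing.Theory Num.Theory.
Local Open Scope ring_scope.

(* Unlike [enum 'I_n], this enumeration reduces under [vm_compute]. *)
Fixpoint ord_list n : seq 'I_n :=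
  if n is n'.+1 then ord0 :: map (lift ord0) (ord_list n') else [::].

Lemma ord_list_enum n : ord_list n = enum 'I_n.
Proof.
apply: (inj_map val_inj); rewrite val_enum_ord.
elim: n => //= n IH; rewrite -map_comp (@eq_map _ _ _ (addn 1 \o val)) => [|i //].
by rewrite map_comp IH -iotaDl.
Qed.

Lemma big_ord_list (T : Type) (idx : T) (op : Monoid.law idx) n (F : 'I_n -> T) :
  \big[op/idx]_(i <- ord_list n) F i = \big[op/idx]_(i < n) F i.
Proof. by rewrite ord_list_enum /index_enum -enumT. Qed.

Section IndexSequences.
Variable n : nat.

Definition ltI : rel 'I_n := fun a b => (a < b)%N.

Lemma ltI_trans : transitive ltI.
Proof. by move=> y x z; apply: ltn_trans. Qed.

Lemma ltI_irr : irreflexive ltI.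
Proof. by move=> x; rewrite /ltI ltnn. Qed.

Lemma sorted_enum_ord : sorted ltI (enum 'I_n).
Proof. by have := iota_ltn_sorted 0 n; rewrite -val_enum_ord sorted_map. Qed.

Fixpoint seqs k : seq (seq 'I_n) :=
  if k is k'.+1 then [seq x :: s | x <- ord_list n, s <- seqs k'] else [:: [::]].

Definition incr_seqs k := [seq s <- seqs k | sorted ltI s].

Lemma size_seqs k s : s \in seqs k -> size s = k.
Proof.
elim: k s => [|k IH] s /=; first by rewrite inE => /eqP ->.
by case/allpairsPdep=> x [t [_ tk ->]] /=; rewrite (IH t).
Qed.

Lemma incr_seqsP k s : s \in incr_seqs k -> uniq s /\ size s = k.
Proof.
rewrite mem_filter => /andP[so sk]; split; last exact: size_seqs.
exact: sorted_uniq ltI_trans ltI_irr _ so.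
Qed.

Lemma big_seqsS (V : nmodType) k (F : seq 'I_n -> V) :
  \sum_(s <- seqs k.+1) F s = \sum_(i < n) \sum_(s <- seqs k) F (i :: s).
Proof. by rewrite /index_enum -enumT -ord_list_enum /= big_allpairs_dep. Qed.

Lemma big_tuple_seqs (V : nmodType) k (F : seq 'I_n -> V) :
  \sum_(t : k.-tuple 'I_n) F t = \sum_(s <- seqs k) F s.
Proof.
elim: k F => [|k IH] F.
  rewrite (eq_bigr (fun _ => F [::])) => [|t _]; last by rewrite tuple0.
  by rewrite big_const card_tuple /= big_seq1 addr0.
rewrite (reindex (fun p : 'I_n * k.-tuple 'I_n => [tuple of p.1 :: p.2])); last first.
  exists (fun t : k.+1.-tuple 'I_n => (thead t, [tuple of behead t])).
    by move=> [x t] _ /=; rewrite theadE; congr pair; apply: val_inj.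
  by move=> t _; rewrite [in RHS](tuple_eta t).
rewrite -(pair_big xpredT xpredT (fun x (t : k.-tuple 'I_n) => F (x :: t))) /=.
by rewrite big_seqsS; apply: eq_bigr => x _; apply: IH.
Qed.

Lemma big_incr_seqs (V : nmodType) k (F : seq 'I_n -> V) :
  \sum_(t : k.-tuple 'I_n | sorted ltI t) F t = \sum_(s <- incr_seqs k) F s.
Proof.
rewrite big_mkcond (big_tuple_seqs _ (fun s => if sorted ltI s then F s else 0)).
by rewrite -big_mkcond big_filter.
Qed.

Fixpoint ins x s :=
  if s is y :: s' then if ltI x y then x :: s else y :: ins x s' else [:: x].

Definition isort (s : seq 'I_n) := foldr ins [::] s.

Lemma perm_ins x s : perm_eq (ins x s) (x :: s).
Proof.
elim: s => //= y s IH; case: ifP => // _.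
apply: (@perm_trans _ (y :: x :: s)); first by rewrite perm_cons.
by apply/permPl; exact: (perm_catCA [:: y] [:: x] s).
Qed.

Lemma path_ins x y s : path ltI y s -> ltI y x -> x \notin s -> path ltI y (ins x s).
Proof.
elim: s y => [|z s IH] y /=; first by move=> _ ->.
move=> /andP[yz zs] yx; rewrite inE negb_or => /andP[xz xs].
case: ifP => xz' /=; first by rewrite yx xz' zs.
rewrite yz IH //; move: xz xz'; rewrite /ltI -val_eqE /=.
by case: ltngtP.
Qed.

Lemma sorted_ins x s : sorted ltI s -> x \notin s -> sorted ltI (ins x s).
Proof.
case: s => //= y s ys; rewrite inE negb_or => /andP[xy xs].
case: ifP => xy' /=; first by rewrite xy' ys.
apply: path_ins => //; move: xy xy'; rewrite /ltI -val_eqE /=.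
by case: ltngtP.
Qed.

Lemma perm_isort s : perm_eq (isort s) s.
Proof.
elim: s => //= x s IH.
by apply: perm_trans (perm_ins _ _) _; rewrite perm_cons.
Qed.

Lemma sorted_isort s : uniq s -> sorted ltI (isort s).
Proof.
elim: s => //= x s IH /andP[xs us].
by rewrite sorted_ins ?IH // (perm_mem (perm_isort s)).
Qed.

Lemma isort_enum s : uniq s -> size s = n -> isort s = enum 'I_n.
Proof.
move=> us sn; have ui : uniq (isort s) by rewrite (perm_uniq (perm_isort s)).
apply: (irr_sorted_eq ltI_trans ltI_irr); rewrite ?sorted_isort ?sorted_enum_ord //.
have := uniq_min_size ui (fun i _ => mem_enum 'I_n i).
by rewrite (perm_size (perm_isort s)) sn size_enum_ord => /(_ (leqnn _)) [].
Qed.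

End IndexSequences.

Lemma mxmulrnI (R : numDomainType) m p k (A B : 'M[R]_(m, p)) :
  A *+ k.+1 = B *+ k.+1 -> A = B.
Proof.
move/matrixP=> h; apply/matrixP => i j.
by apply: (pmulrnI (ltn0Sn k)); rewrite -!mulmxnE h.
Qed.

Section SeqSign.
Variables (R : numDomainType) (n : nat).

Definition ord_sign (x y : 'I_n) : R :=
  if (x < y)%N then 1 else if x == y then 0 else -1.

Fixpoint seq_sign (s : seq 'I_n) : R :=
  if s is x :: s' then (\prod_(y <- s') ord_sign x y) * seq_sign s' else 1.

Lemma sqr_ord_sign x y : ord_sign x y ^+ 2 = (x != y)%:R.
Proof.
rewrite /ord_sign -val_eqE /=.
by case: ltngtP => _ //=; rewrite ?expr1n ?sqrrN ?expr1n ?expr0n.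
Qed.

Lemma sqr_prod_ord_sign x s : (\prod_(y <- s) ord_sign x y) ^+ 2 = (x \notin s)%:R.
Proof.
elim: s => [|y s IH]; first by rewrite big_nil expr1n.
rewrite big_cons exprMn IH sqr_ord_sign inE negb_or.
by case: (x == y); case: (x \in s); rewrite /= ?mul1r ?mul0r.
Qed.

Lemma sqr_seq_sign s : seq_sign s ^+ 2 = (uniq s)%:R.
Proof.
elim: s => [|x s IH] /=; first by rewrite expr1n.
rewrite exprMn IH sqr_prod_ord_sign.
by case: (x \in s); case: (uniq s); rewrite /= ?mul1r ?mul0r.
Qed.

Lemma seq_sign_nuniq s : ~~ uniq s -> seq_sign s = 0.
Proof. by move/negPf=> nu; apply/eqP; rewrite -sqrf_eq0 sqr_seq_sign nu. Qed.

End SeqSign.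

Section CliffordProducts.
Variables (R : numFieldType) (n d : nat) (gam : 'I_n -> 'M[R]_d.+1).
Hypothesis gam_anticomm :
  forall i j, gam i *m gam j + gam j *m gam i = (- 2 * (i == j)%:R)%:M.
Hypothesis gam_skew : forall i, (gam i)^T = - gam i.

Lemma gam_sq i : gam i * gam i = -1.
Proof.
apply: (@mxmulrnI _ _ _ 1); rewrite mulr2n -mulmxE gam_anticomm eqxx mulr1.
by rewrite -mulNrn raddfMn /= -scalemx1 scaleN1r.
Qed.

Lemma gam_anticomm_neq i j : i != j -> gam i * gam j = - (gam j * gam i).
Proof.
move=> /negPf ij; have := gam_anticomm i j; rewrite ij mulr0 -!mulmxE => h.
by apply/eqP; rewrite -addr_eq0 h raddf0.
Qed.

Lemma trmxM (A B : 'M[R]_d.+1) : (A * B)^T = B^T * A^T.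
Proof. by rewrite -!mulmxE trmx_mul. Qed.

Definition gprod (s : seq 'I_n) : 'M[R]_d.+1 := \prod_(i <- s) gam i.

Lemma gprod_cons x s : gprod (x :: s) = gam x * gprod s.
Proof. by rewrite /gprod big_cons. Qed.

Lemma gprod_cat s1 s2 : gprod (s1 ++ s2) = gprod s1 * gprod s2.
Proof. by rewrite /gprod big_cat. Qed.

Lemma gprod_orth s : (gprod s)^T * gprod s = 1.
Proof.
elim: s => [|x s IH]; first by rewrite /gprod big_nil trmx1 mulr1.
rewrite gprod_cons trmxM gam_skew -mulrA (mulrA (- gam x)) mulNr gam_sq opprK.
by rewrite mul1r.
Qed.

Lemma gprod_move s1 x s2 : x \notin s1 ->
  gprod (s1 ++ x :: s2) = (-1) ^+ size s1 *: (gam x * gprod (s1 ++ s2)).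
Proof.
elim: s1 => [|y s1 IH] /=; first by rewrite expr0 scale1r gprod_cons.
rewrite inE negb_or => /andP[xy xs1].
rewrite !gprod_cons IH // exprS -scalerA -scalerAr mulrA (gam_anticomm_neq xy).
by rewrite mulrA mulNr scalerN scaleNr scale1r opprK.
Qed.

Lemma gprod_ins x s : sorted (@ltI n) s -> x \notin s ->
  gam x * gprod s = (\prod_(y <- s) ord_sign R x y) *: gprod (ins x s).
Proof.
elim: s => [|y s IH] /=; first by rewrite big_nil scale1r /gprod big_nil big_seq1 mulr1.
move=> ys; rewrite inE negb_or => /andP[xy xs].
case: ifP; rewrite /ltI => xy'.
  rewrite big1_seq ?scale1r ?gprod_cons // => z /andP[_ zs].
  suff xz : (x < z)%N by rewrite /ord_sign xz.
  move: zs; rewrite inE => /orP[/eqP -> //|zs].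
  have /allP/(_ z zs) := order_path_min (@ltI_trans n) ys.
  exact: ltn_trans.
rewrite gprod_cons mulrA gam_anticomm_neq // mulNr -mulrA IH ?(path_sorted ys) //.
by rewrite big_cons gprod_cons -scalerAr /ord_sign xy' (negPf xy) mulN1r scaleNr.
Qed.

Lemma gprod_isort s : uniq s -> gprod s = seq_sign R s *: gprod (isort s).
Proof.
elim: s => [|x s IH] /=; first by rewrite scale1r.
move=> /andP[xs us].
rewrite gprod_cons IH // -scalerAr gprod_ins ?sorted_isort //; last first.
  by rewrite (perm_mem (perm_isort s)).
by rewrite scalerA (perm_big _ (perm_isort s)) mulrC.
Qed.

Lemma gprod_conj_isort (M : 'M[R]_d.+1) s : uniq s ->
  gprod s *m M *m (gprod s)^T = gprod (isort s) *m M *m (gprod (isort s))^T.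
Proof.
move=> us; rewrite gprod_isort // linearZ /= -!scalemxAl -scalemxAr scalerA.
by rewrite -expr2 sqr_seq_sign us scale1r.
Qed.

Lemma tr_gprod3 s : uniq s -> size s = 3%N -> (gprod s)^T = gprod s.
Proof.
case: s => [|x [|y [|z [|? ?]]]] //= + _.
rewrite !inE !negb_or !andbT => /andP[/andP[xy xz] yz].
rewrite /gprod !big_cons big_nil mulr1 !trmxM !gam_skew mulrNN mulrN -mulrA.
rewrite (gam_anticomm_neq (i := y) (j := x)) 1?eq_sym // mulrN opprK [LHS]mulrA.
rewrite (gam_anticomm_neq (i := z) (j := x)) 1?eq_sym // mulNr -mulrA.
by rewrite (gam_anticomm_neq (i := z) (j := y)) 1?eq_sym // mulrN opprK mulrA.
Qed.

End CliffordProducts.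

Lemma nuniq_seqs2 : [seq s <- seqs 7 2 | predC uniq s] = [seq [:: x; x] | x <- ord_list 7].
Proof. by vm_compute. Qed.

Lemma perm_isort_seqs2 :
  perm_eq [seq isort s | s <- seqs 7 2 & uniq s] (incr_seqs 7 2 ++ incr_seqs 7 2).
Proof. by vm_compute. Qed.

Lemma perm_isort_cons_incr2 :
  perm_eq [seq isort s | s <- [seq a :: u | a <- ord_list 7, u <- incr_seqs 7 2] & uniq s]
    (incr_seqs 7 3 ++ incr_seqs 7 3 ++ incr_seqs 7 3).
Proof. by vm_compute. Qed.

Definition pairs3 := [seq (a, t) | a <- ord_list 7, t <- incr_seqs 7 3].

Definition incident3 := [seq (nth ord0 t j, t) | t <- incr_seqs 7 3, j <- iota 0 3].

Definition complementary (t K : seq 'I_7) := uniq (t ++ K) && (size (t ++ K) == 7%N).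

Definition interior_triples := [seq (J, p) | J <- incr_seqs 7 3, p <- pairs3].

Definition wedge_triples :=
  [seq (sj, t) | sj <- [seq (s, j) | s <- incr_seqs 7 5, j <- iota 0 5], t <- incr_seqs 7 3].

Lemma perm_incident3_isort :
  perm_eq incident3
    [seq (a, isort (a :: u)) | a <- ord_list 7, u <- [seq u <- incr_seqs 7 2 | a \notin u]].
Proof. by vm_compute. Qed.

(* A pair (a, t) with a ∉ t has exactly one increasing triple J complementary to a :: t,
   a pair with a ∈ t has none. *)
Lemma perm_interior_triples :
  perm_eq (map snd [seq q <- interior_triples | complementary q.2.2 (q.2.1 :: q.1)]
           ++ incident3) pairs3.
Proof. by vm_compute. Qed.

(* Deleting the j-th entry of an increasing 5-sequence s leaves the complement of t
   only if s_j ∈ t, and each pair (a, t) with a ∈ t arises exactly once. *)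
Lemma perm_wedge_triples :
  perm_eq [seq (nth ord0 q.1.1 q.1.2, q.2) | q <- wedge_triples
             & complementary q.2 (take q.1.2 q.1.1 ++ drop q.1.2.+1 q.1.1)]
    incident3.
Proof. by vm_compute. Qed.

Lemma big_interior_triples (V : nmodType) (F : 'I_7 -> seq 'I_7 -> V) :
  \sum_(q <- interior_triples | complementary q.2.2 (q.2.1 :: q.1)) F q.2.1 q.2.2
  + \sum_(p <- incident3) F p.1 p.2 = \sum_(p <- pairs3) F p.1 p.2.
Proof.
rewrite -big_filter -(big_map snd xpredT (fun p => F p.1 p.2)) -big_cat.
exact: perm_big perm_interior_triples.
Qed.

Lemma big_wedge_triples (V : nmodType) (F : 'I_7 -> seq 'I_7 -> V) :
  \sum_(q <- wedge_triples | complementary q.2 (take q.1.2 q.1.1 ++ drop q.1.2.+1 q.1.1))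
    F (nth ord0 q.1.1 q.1.2) q.2
  = \sum_(p <- incident3) F p.1 p.2.
Proof.
rewrite -big_filter -(big_map (fun q => (nth ord0 q.1.1 q.1.2, q.2)) xpredT (fun p => F p.1 p.2)).
exact: perm_big perm_wedge_triples.
Qed.

Section Spin7.
Variables (R : realFieldType) (gam : 'I_7 -> 'M[R]_8) (o : R) (Psi : spinor R).
Hypothesis gam_anticomm :
  forall i j, gam i *m gam j + gam j *m gam i = (- 2 * (i == j)%:R)%:M.
Hypothesis gam_skew : forall i, (gam i)^T = - gam i.
Hypothesis gam_vol : \prod_(i < 7) gam i = o%:M.
Hypothesis Psi_unit : sdot Psi Psi = 1.

Local Notation gp := (gprod gam).
Local Notation incr := (incr_seqs 7).
Local Notation gam_sq := (gam_sq gam_anticomm).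
Local Notation gam_anticomm_neq := (gam_anticomm_neq gam_anticomm).

Lemma gprod_enum : gp (enum 'I_7) = o%:M.
Proof. by rewrite -gam_vol /gprod /index_enum -enumT. Qed.

Lemma vol_sq : o * o = 1.
Proof.
have := gprod_orth gam_anticomm gam_skew (enum 'I_7).
rewrite gprod_enum tr_scalar_mx -mulmxE -scalar_mxM => /matrixP/(_ ord0 ord0).
by rewrite !mxE eqxx.
Qed.

Lemma levi_seq_sign s : levi R s = if size s == 7%N then seq_sign R s else 0.
Proof.
rewrite /levi; case: eqP => // s7.
case: s s7 => [|x0 [|x1 [|x2 [|x3 [|x4 [|x5 [|x6 [|x7 s]]]]]]]] // _.
rewrite !big_ord_recl big_ord0 /= !(big_mkcond (fun b : 'I_7 => _ < b)%N) /=.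
rewrite !big_ord_recl !big_ord0 /= !big_cons !big_nil /= -!/(ord_sign _ _ _).
ring.
Qed.

Lemma sqr_levi_cat t K : levi R (t ++ K) ^+ 2 = (complementary t K)%:R.
Proof.
rewrite /complementary levi_seq_sign; case: eqP => _.
  by rewrite andbT sqr_seq_sign.
by rewrite andbF expr0n.
Qed.

(* The volume element acts as the scalar [o], so [e_t e_K = +-o] for complementary [t], [K]. *)
Lemma levi_gprod t K :
  levi R (t ++ K) *: gp K = (levi R (t ++ K) ^+ 2 * o) *: (gp t)^T.
Proof.
have [/andP[u /eqP s7]|nu] := boolP (complementary t K).
  have tK : gp t * gp K = (levi R (t ++ K) * o) *: 1.
    rewrite -gprod_cat (gprod_isort gam_anticomm) // isort_enum // gprod_enum.
    by rewrite levi_seq_sign s7 eqxx -scalemx1 scalerA.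
  have := congr1 (fun A => (gp t)^T * A) tK.
  rewrite /= mulrA (gprod_orth gam_anticomm gam_skew) mul1r -scalerAr mulr1 => ->.
  by rewrite scalerA mulrA expr2.
have -> : levi R (t ++ K) = 0.
  rewrite levi_seq_sign; case: eqP => // /eqP s7.
  by apply: seq_sign_nuniq; move: nu; rewrite /complementary s7 andbT.
by rewrite expr0n /= !mul0r !scale0r.
Qed.

Lemma hodge_gprod t K : uniq t -> size t = 3%N ->
  (o * levi R (t ++ K)) *: gp K = levi R (t ++ K) ^+ 2 *: gp t.
Proof.
move=> ut t3; rewrite -scalerA levi_gprod (tr_gprod3 gam_anticomm gam_skew) //.
by rewrite scalerA mulrCA vol_sq mulr1.
Qed.

Definition expect (A : 'M[R]_8) : R := (Psi^T *m A *m Psi) 0 0.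

Lemma expect_tr A : expect A^T = expect A.
Proof.
rewrite /expect; have -> : Psi^T *m A^T *m Psi = (Psi^T *m A *m Psi)^T.
  by rewrite !trmx_mul trmxK mulmxA.
by rewrite mxE.
Qed.

Lemma expectZ c A : expect (c *: A) = c * expect A.
Proof. by rewrite /expect -scalemxAr -scalemxAl mxE. Qed.

Lemma expectN A : expect (- A) = - expect A.
Proof. by rewrite /expect mulmxN mulNmx mxE. Qed.

Lemma expect1 : expect 1 = 1.
Proof. by rewrite /expect mulmx1. Qed.

Lemma expect_skew A : A^T = - A -> expect A = 0.
Proof.
move=> skewA; have : expect A = - expect A by rewrite -{1}expect_tr skewA expectN.
lra.
Qed.

Lemma expect_gam i : expect (gam i) = 0.
Proof. exact/expect_skew/gam_skew. Qed.

Lemma expect_gam2 i j : i != j -> expect (gam i * gam j) = 0.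
Proof.
move=> ij; apply: expect_skew.
by rewrite trmxM !gam_skew mulrNN gam_anticomm_neq 1?eq_sym.
Qed.

Definition omega_coef s := - expect (gp s).

Lemma vact_basis i : vact gam (basis R i) = gam i.
Proof.
rewrite /vact (bigD1 i) //= big1 => [|j ji]; last first.
  by rewrite mxE eq_sym (negPf ji) scale0r.
by rewrite mxE eqxx scale1r addr0.
Qed.

Lemma omega3_formE s : size s = 3%N -> omega3_form gam Psi s = omega_coef s.
Proof.
case: s => [|x [|y [|z [|? ?]]]] // _.
rewrite /omega3_form /omega3 /= !vact_basis /omega_coef /sdot /gprod.
rewrite !big_cons big_nil mulr1 -expect_tr /expect !trmx_mul !mulmxE.
by rewrite !mulrA.
Qed.

Lemma omega_coef_nuniq s : size s = 3%N -> ~~ uniq s -> omega_coef s = 0.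
Proof.
case: s => [|x [|y [|z [|? ?]]]] // _ nu.
rewrite /omega_coef /gprod !big_cons big_nil mulr1.
have [<-|xy] := eqVneq x y.
  by rewrite mulrA gam_sq mulN1r expectN expect_gam !oppr0.
have [<-|yz] := eqVneq y z; first by rewrite gam_sq mulrN1 expectN expect_gam !oppr0.
have [<-|xz] := eqVneq x z.
  rewrite (gam_anticomm_neq (i := y) (j := x)) 1?eq_sym // mulrN mulrA gam_sq.
  by rewrite mulN1r opprK expect_gam oppr0.
by move: nu; rewrite /= !inE (negPf xy) (negPf xz) (negPf yz).
Qed.

Definition proj_psi : 'M[R]_8 := Psi *m Psi^T.

Definition gam_psi : 'M[R]_(8, 7) := \matrix_(r, i) (gam i *m Psi) r 0.

Lemma frame_orthonormal : (row_mx Psi gam_psi)^T *m row_mx Psi gam_psi = 1%:M.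
Proof.
have PP : Psi^T *m Psi = 1%:M.
  apply/matrixP => i j; rewrite [i]ord1 [j]ord1 [RHS]mxE eqxx mulr1n.
  exact: Psi_unit.
have PB : Psi^T *m gam_psi = 0.
  apply/matrixP => a i; rewrite [a]ord1 !mxE -[RHS](expect_gam i) /expect -mulmxA mxE.
  by apply: eq_bigr => r _; rewrite !mxE.
have BB : gam_psi^T *m gam_psi = 1%:M.
  apply/matrixP => i j.
  have -> : (gam_psi^T *m gam_psi) i j = expect ((gam i)^T * gam j).
    rewrite /expect -mulmxE !mulmxA -(mulmxA _ _ Psi) -trmx_mul !mxE.
    by apply: eq_bigr => r _; rewrite !mxE.
  rewrite gam_skew mulNr expectN !mxE.
  case: eqP => [->|/eqP ij]; first by rewrite gam_sq expectN opprK expect1.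
  by rewrite expect_gam2 // oppr0.
rewrite tr_row_mx mul_col_row PP PB BB -[gam_psi^T *m Psi]trmxK trmx_mul trmxK PB.
by rewrite trmx0 -scalar_mx_block.
Qed.

Definition conj_sum (M : 'M[R]_8) := \sum_(i < 7) gam i *m M *m (gam i)^T.

Lemma conj_sumB A B : conj_sum (A - B) = conj_sum A - conj_sum B.
Proof. by rewrite /conj_sum -sumrB; apply: eq_bigr => i _; rewrite mulmxBr mulmxBl. Qed.

Lemma conj_sum1 : conj_sum 1%:M = 1%:M *+ 7.
Proof.
rewrite /conj_sum (eq_bigr (fun _ => 1%:M)) ?sumr_const ?card_ord // => i _.
by rewrite mulmx1 gam_skew mulmxN mulmxE gam_sq opprK.
Qed.

Lemma conj_sum_proj : conj_sum proj_psi = 1%:M - proj_psi.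
Proof.
have := mulmx1C frame_orthonormal; rewrite tr_row_mx mul_row_col => <-.
rewrite [_ + gam_psi *m _]addrC addrK.
apply/matrixP => r s; rewrite summxE mxE; apply: eq_bigr => i _.
by rewrite /proj_psi mulmxA -mulmxA -trmx_mul !mxE big_ord1 !mxE.
Qed.

Definition pair_sum (M : 'M[R]_8) := \sum_(s <- incr 2) gp s *m M *m (gp s)^T.

Lemma conj_sum2 M : conj_sum (conj_sum M) = M *+ 7 + pair_sum M *+ 2.
Proof.
have -> : conj_sum (conj_sum M) = \sum_(s <- seqs 7 2) gp s *m M *m (gp s)^T.
  rewrite /conj_sum big_seqsS; apply: eq_bigr => x _.
  rewrite mulmx_sumr mulmx_suml big_seqsS.
  apply: eq_bigr => y _; rewrite big_seq1 !gprod_cons /gprod big_nil mulr1 trmxM.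
  by rewrite -!mulmxE !mulmxA.
rewrite -(perm_big _ (permEl (perm_filterC uniq _))) big_cat [RHS]addrC.
congr (_ + _).
  rewrite (eq_big_seq (fun s => gp (isort s) *m M *m (gp (isort s))^T)) => [|s].
    rewrite -(big_map (@isort 7) xpredT (fun s => gp s *m M *m (gp s)^T)).
    by rewrite (perm_big _ perm_isort_seqs2) big_cat mulr2n.
  by rewrite mem_filter => /andP[us _]; apply: gprod_conj_isort.
rewrite nuniq_seqs2 big_map (eq_bigr (fun _ => M)) => [|x _].
  by rewrite big_const_seq iter_addr_0 count_predT ord_list_enum size_enum_ord.
rewrite gprod_cons /gprod big_seq1 trmxM gam_skew mulrNN gam_sq.
by rewrite !mulmxE mulN1r mulrN1 opprK.
Qed.

Lemma pair_sum_proj : pair_sum proj_psi = (1%:M - proj_psi) *+ 3.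
Proof.
have := conj_sum2 proj_psi; rewrite conj_sum_proj conj_sumB conj_sum1 conj_sum_proj.
move=> h; apply: (@mxmulrnI _ _ _ 1); apply/matrixP => i j.
move/matrixP: h => /(_ i j); rewrite !(mulmxnE, mxE) => h.
lra.
Qed.

(* [omega_coef (a :: u)] is the component of [e_a Psi] along [e_u Psi]. *)
Lemma interior_omega_gam a :
  \sum_(u <- incr 2) omega_coef (a :: u) *: (gp u *m Psi) = (gam a *m Psi) *+ 3.
Proof.
have term u : omega_coef (a :: u) *: (gp u *m Psi)
    = gp u *m proj_psi *m (gp u)^T *m (gam a *m Psi).
  rewrite /proj_psi -!mulmxA [Psi^T *m _]mx11_scalar mul_mx_scalar -scalemxAr.
  congr (_ *: _).
  rewrite /omega_coef gprod_cons -expect_tr trmxM gam_skew mulrN expectN opprK.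
  by rewrite /expect -mulmxE !mulmxA.
rewrite (eq_bigr _ (fun u _ => term u)) -mulmx_suml -/(pair_sum proj_psi).
rewrite pair_sum_proj -scaler_nat -scalemxAl mulmxBl mul1mx /proj_psi -mulmxA.
rewrite [Psi^T *m _]mx11_scalar mulmxA -/(expect (gam a)) expect_gam.
by rewrite mul_mx_scalar scale0r subr0 scaler_nat.
Qed.

Definition omega_mon s := omega_coef s *: gp s.

Lemma omega_mon_isort s : uniq s -> omega_mon s = omega_mon (isort s).
Proof.
move=> us; rewrite /omega_mon /omega_coef {1 2}(gprod_isort gam_anticomm) //.
rewrite expectZ scalerA; congr (_ *: _).
by rewrite mulNr mulrAC -expr2 sqr_seq_sign us mul1r.
Qed.

Lemma omega_action : \sum_(t <- incr 3) omega_mon t *m Psi = - Psi *+ 7.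
Proof.
set L := [seq a :: u | a <- ord_list 7, u <- incr 2].
have sumL : \sum_(s <- L) omega_mon s *m Psi = - Psi *+ 3 *+ 7.
  rewrite /L big_allpairs_dep (eq_bigr (fun _ => - Psi *+ 3)) => [|a _].
    by rewrite big_const_seq iter_addr_0 count_predT ord_list_enum size_enum_ord.
  rewrite (eq_bigr (fun u => gam a *m (omega_coef (a :: u) *: (gp u *m Psi)))) => [|u _].
    rewrite -mulmx_sumr interior_omega_gam raddfMn /= mulmxA mulmxE gam_sq.
    by rewrite mulNmx mul1mx.
  by rewrite /omega_mon gprod_cons -mulmxE -scalemxAl -mulmxA -scalemxAr.
have sum_uniq : \sum_(s <- [seq s <- L | uniq s]) omega_mon s *m Psi
    = (\sum_(t <- incr 3) omega_mon t *m Psi) *+ 3.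
  rewrite (eq_big_seq (fun s => omega_mon (isort s) *m Psi)) => [|s].
    rewrite -(big_map (@isort 7) xpredT (fun s => omega_mon s *m Psi)).
    by rewrite (perm_big _ perm_isort_cons_incr2) !big_cat /= -mulr2n -mulrS.
  by rewrite mem_filter => /andP[us _]; rewrite omega_mon_isort.
have sum_nuniq : \sum_(s <- [seq s <- L | predC uniq s]) omega_mon s *m Psi = 0.
  rewrite big_seq big1 // => s; rewrite mem_filter => /andP[nu sL].
  rewrite /omega_mon omega_coef_nuniq ?scale0r ?mul0mx //.
  by case/allpairsPdep: sL => a [u [_ /incr_seqsP[_ u2] ->]] /=; rewrite u2.
apply: (@mxmulrnI _ _ _ 2); rewrite -sum_uniq mulrnAC -sumL.
by rewrite -(perm_big _ (permEl (perm_filterC uniq L))) big_cat sum_nuniq /= addr0.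
Qed.

Lemma cl_formE k (alpha : seq 'I_7 -> R) : cl_form gam k alpha = \sum_(s <- incr k) alpha s *: gp s.
Proof. exact: (big_incr_seqs _ (fun s => alpha s *: gp s)). Qed.

Lemma hodgeE (alpha : seq 'I_7 -> R) J :
  hodge o 3 alpha J = o * \sum_(t <- incr 3) alpha t * levi R (t ++ J).
Proof. by rewrite /hodge (big_incr_seqs _ (fun s => alpha s * levi R (s ++ J))). Qed.

Lemma vact_Psi X : vact gam X *m Psi = \sum_(a <- ord_list 7) X 0 a *: (gam a *m Psi).
Proof. by rewrite big_ord_list /vact mulmx_suml; apply: eq_bigr => a _; rewrite -scalemxAl. Qed.

Definition vec_mon (X : vec R) a t := X 0 a *: (gam a *m (omega_mon t *m Psi)).

Lemma sum_pairs3 X : \sum_(p <- pairs3) vec_mon X p.1 p.2 = (- (vact gam X *m Psi)) *+ 7.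
Proof.
rewrite /pairs3 big_allpairs_dep vact_Psi -sumrN -sumrMnl; apply: eq_bigr => a _.
rewrite /vec_mon /= -scaler_sumr -mulmx_sumr omega_action raddfMn raddfN /=.
by rewrite -scalerMnr scalerN.
Qed.

Lemma sum_incident3 X : \sum_(p <- incident3) vec_mon X p.1 p.2 = (- (vact gam X *m Psi)) *+ 3.
Proof.
rewrite (perm_big _ perm_incident3_isort) big_allpairs_dep vact_Psi -sumrN -sumrMnl.
apply: eq_bigr => a _; rewrite big_filter big_mkcond big_seq.
rewrite (eq_bigr (fun u => - (X 0 a *: (omega_coef (a :: u) *: (gp u *m Psi))))) => [|u].
  by rewrite -big_seq sumrN -scaler_sumr interior_omega_gam -scalerMnr mulNrn.
move=> /incr_seqsP[uu u2] /=; case: ifP => au.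
  rewrite /vec_mon -[ins a _]/(isort (a :: u)) -omega_mon_isort /=; last by rewrite au uu.
  rewrite /omega_mon gprod_cons -mulmxE -scalemxAl -mulmxA -scalemxAr !mulmxA mulmxE.
  by rewrite gam_sq mulN1r mulNmx !scalerN.
by rewrite omega_coef_nuniq ?scale0r ?scaler0 ?oppr0 //= ?u2 ?au.
Qed.

Lemma interior_omega_action X :
  cl_form gam 2 (interior X (omega3_form gam Psi)) *m Psi = (vact gam X *m Psi) *+ 3.
Proof.
rewrite cl_formE mulmx_suml.
rewrite (eq_big_seq (fun u =>
  \sum_(a <- ord_list 7) X 0 a *: (omega_coef (a :: u) *: (gp u *m Psi)))) => [|u].
  rewrite exchange_big vact_Psi -sumrMnl; apply: eq_bigr => a _.
  by rewrite -scaler_sumr interior_omega_gam -scalerMnr.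
move=> /incr_seqsP[_ u2]; rewrite /interior -big_ord_list scaler_suml mulmx_suml.
by apply: eq_bigr => a _; rewrite omega3_formE /= ?u2 // -scalemxAl scalerA.
Qed.

Lemma hodge_vec_mon (X : vec R) t K x (c : R) : t \in incr 3 ->
  ((X 0 x * c) * (o * (omega3_form gam Psi t * levi R (t ++ K)))) *: (gam x * gp K) *m Psi
  = (c * levi R (t ++ K) ^+ 2) *: vec_mon X x t.
Proof.
move=> /incr_seqsP[ut t3]; rewrite omega3_formE //.
have -> : X 0 x * c * (o * (omega_coef t * levi R (t ++ K)))
    = X 0 x * c * omega_coef t * (o * levi R (t ++ K)) by ring.
rewrite -scalerA scalerAr hodge_gprod // -scalerAr /vec_mon /omega_mon.
rewrite -!scalemxAl -!scalemxAr !scalerA -mulmxE mulmxA.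
by congr (_ *: _); ring.
Qed.

Lemma interior_hodge_omega_action X :
  cl_form gam 3 (interior X (hodge o 3 (omega3_form gam Psi))) *m Psi
  = (vact gam X *m Psi) *+ 4.
Proof.
have expand : cl_form gam 3 (interior X (hodge o 3 (omega3_form gam Psi))) *m Psi
    = - \sum_(q <- interior_triples)
          (if complementary q.2.2 (q.2.1 :: q.1) then vec_mon X q.2.1 q.2.2 else 0).
  rewrite cl_formE mulmx_suml /interior_triples big_allpairs_dep -sumrN.
  apply: eq_bigr => J _.
  rewrite /pairs3 big_allpairs_dep /interior -big_ord_list scaler_suml mulmx_suml -sumrN.
  apply: eq_bigr => a _.
  rewrite hodgeE mulr_sumr mulr_sumr scaler_suml mulmx_suml -sumrN.
  apply: eq_big_seq => t tin.
  have -> : gp J = - (gam a * gp (a :: J)) by rewrite gprod_cons mulrA gam_sq mulN1r opprK.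
  rewrite scalerN mulNmx -[X 0 a]mulr1 hodge_vec_mon // mul1r sqr_levi_cat.
  by case: complementary; rewrite ?scale1r ?scale0r.
have sum_compl : \sum_(q <- interior_triples | complementary q.2.2 (q.2.1 :: q.1))
      vec_mon X q.2.1 q.2.2 = (- (vact gam X *m Psi)) *+ 7 - (- (vact gam X *m Psi)) *+ 3.
  by rewrite -sum_incident3 -sum_pairs3 -(big_interior_triples (vec_mon X)) addrK.
by rewrite expand -big_mkcond sum_compl -mulrnBr // mulNrn opprK.
Qed.

Lemma wedge_hodge_omega_action X :
  cl_form gam 5 (wedge1 X (hodge o 3 (omega3_form gam Psi))) *m Psi
  = (- (vact gam X *m Psi)) *+ 3.
Proof.
set beta := hodge o 3 (omega3_form gam Psi).
have expand : cl_form gam 5 (wedge1 X beta) *m Psi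
    = \sum_(q <- wedge_triples)
        (if complementary q.2 (take q.1.2 q.1.1 ++ drop q.1.2.+1 q.1.1)
         then vec_mon X (nth ord0 q.1.1 q.1.2) q.2 else 0).
  rewrite cl_formE mulmx_suml /wedge_triples big_allpairs_dep big_allpairs_dep.
  apply: eq_big_seq => s /incr_seqsP[us s5].
  rewrite /wedge1 -(big_mkord xpredT (fun j => (-1) ^+ j * X 0 (nth ord0 s j)
    * beta (take j s ++ drop j.+1 s))) s5 /index_iota subn0 scaler_suml mulmx_suml.
  apply: eq_big_seq => j; rewrite mem_iota => /andP[_ j5].
  set x := nth ord0 s j; set K := take j s ++ drop j.+1 s.
  have es : s = take j s ++ x :: drop j.+1 s by rewrite -drop_nth ?s5 // cat_take_drop.
  have eG : gp s = (-1) ^+ j *: (gam x * gp K).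
    have xt : x \notin take j s.
      by move: us; rewrite {1}es cat_uniq => /and3P[_ /hasPn + _]; apply; rewrite inE eqxx.
    by rewrite {1}es (gprod_move gam_anticomm) // size_takel // s5 ltnW.
  rewrite /beta hodgeE mulr_sumr mulr_sumr scaler_suml mulmx_suml.
  apply: eq_big_seq => t tin; rewrite eG scalerA.
  rewrite (_ : (-1) ^+ j * X 0 x * (o * (omega3_form gam Psi t * levi R (t ++ K))) * (-1) ^+ j
     = (X 0 x * ((-1) ^+ j * (-1) ^+ j)) * (o * (omega3_form gam Psi t * levi R (t ++ K))));
     last by ring.
  rewrite hodge_vec_mon // -exprMn mulrNN mulr1 expr1n mul1r sqr_levi_cat.
  by case: complementary; rewrite ?scale1r ?scale0r.
by rewrite expand -big_mkcond big_wedge_triples sum_incident3.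
Qed.

Lemma gam_Psi_neq0 i : gam i *m Psi != 0.
Proof.
apply/negP => /eqP gPsi; have := expect1.
have -> : (1 : 'M[R]_8) = (gam i)^T * gam i by rewrite gam_skew mulNr gam_sq opprK.
rewrite /expect -mulmxE mulmxA -(mulmxA _ _ Psi) gPsi mulmx0 mxE => /eqP.
by rewrite eq_sym oner_eq0.
Qed.

Lemma operator_PsiE p q r (X : vec R) :
  (vact gam X
   + (r / 4) *: cl_form gam 2 (interior X (omega3_form gam Psi))
   + p *: cl_form gam 3 (interior X (hodge o 3 (omega3_form gam Psi)))
   + q *: cl_form gam 5 (wedge1 X (hodge o 3 (omega3_form gam Psi)))) *m Psi
  = (1 + r / 4 * 3 + p * 4 - q * 3) *: (vact gam X *m Psi).
Proof.
rewrite !mulmxDl -!scalemxAl interior_omega_action interior_hodge_omega_action.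
rewrite wedge_hodge_omega_action mulNrn -!scaler_nat !scalerA scalerN scalerA.
by rewrite !scalerDl scale1r scaleNr.
Qed.

End Spin7.

Theorem mainTheorem3 (R : realFieldType) (gam : 'I_7 -> 'M[R]_8) (o : R)
  (Psi : spinor R) (p q r : R) :
  clifford_realization gam ->
  \prod_(i < 7) gam i = o%:M ->
  sdot Psi Psi = 1 ->
  (forall X : vec R,
     (vact gam X
      + (r / 4) *: cl_form gam 2 (interior X (omega3_form gam Psi))
      + p *: cl_form gam 3 (interior X (hodge o 3 (omega3_form gam Psi)))
      + q *: cl_form gam 5 (wedge1 X (hodge o 3 (omega3_form gam Psi))))
     *m Psi = 0)
  <-> 16 * p = -4 + 12 * q - 3 * r.
Proof.
move=> [anticomm skew] vol unit.
have opE := operator_PsiE anticomm skew vol unit p q r.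
split => [/(_ (basis R ord0)) | coef X]; rewrite opE.
  move/eqP; rewrite scaler_eq0 vact_basis (negPf (gam_Psi_neq0 anticomm skew unit _)).
  by rewrite orbF => /eqP; lra.
have -> : 1 + r / 4 * 3 + p * 4 - q * 3 = 0 by lra.
by rewrite scale0r.
Qed.
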